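(* Let $X\subset\mathbb{R}^m$ be a compact algebraic set and $f=(f_1,\dots,f_m):\mathbb{R}^n\to\mathbb{R}^m$ a polynomial map. Let $K\subset\mathbb{R}^n$ be a compact set with non-empty interior in $\mathbb{R}^n$ such that $f(K)\subset X$. Then $f(K)$ is a singleton contained in $X$. *)

From HB Require Import structures.
From mathcomp Require Import all_boot all_order all_algebra.
From mathcomp Require Import all_classical all_reals all_analysis.
From mathcomp Require mpoly.
Set Implicit Arguments. Unset Strict Implicit. Unset Printing Implicit Defensive.
Import Order.TTheory GRing.Theory Num.Theory.
Import numFieldNormedType.Exports.
Local Open Scope classical_set_scope.
Local Open Scope ring_scope.

(* Points of R^n are row vectors 'rV[R]_n (with their canonical normed topology). *)

Definition peval {R : realType} {n : nat} (p : mpoly.mpoly n R) (x : 'rV[R]_n) : R :=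
  mpoly.meval (fun i => x ord0 i) p.

Definition algebraic_set {R : realType} {m : nat} (X : set 'rV[R]_m) : Prop :=
  exists (k : nat) (P : 'I_k -> mpoly.mpoly m R),
    X = [set x | forall j : 'I_k, peval (P j) x = 0].

Definition polymap {R : realType} {n m : nat} (f : 'I_m -> mpoly.mpoly n R)
  (x : 'rV[R]_n) : 'rV[R]_m := \row_(i < m) peval (f i) x.

From HB Require Import structures.
From mathcomp Require Import all_boot all_order all_algebra.
From mathcomp Require Import all_classical all_reals all_analysis.
From mathcomp Require mpoly polyrcf.
From mathcomp Require Import lra.
Set Implicit Arguments. Unset Strict Implicit. Unset Printing Implicit Defensive.
Import Order.TTheory GRing.Theory Num.Theory.
Import numFieldNormedType.Exports.
Local Open Scope classical_set_scope.
Local Open Scope ring_scope.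

(* Restricted to a line, a polynomial map becomes a univariate polynomial; such a polynomial
   is zero if it vanishes near 0, and constant if it is bounded. Hence a polynomial vanishing on
   a ball vanishes everywhere, and a bounded polynomial function on R^n is constant. Applying
   the first fact to the equations of X composed with f, on a ball inside K, gives f(R^n) in X;
   as X is bounded, the second fact makes every component of f constant. *)

Lemma poly_eq0_near0 (R : numFieldType) (p : {poly R}) (e : R) :
  0 < e -> (forall t, `|t| < e -> p.[t] = 0) -> p = 0.
Proof.
move=> e0 p0; apply/eqP/negPn/negP => pn0.
pose rs := [seq e / i.+2%:R | i <- iota 0 (size p)].
suff: (size rs < size p)%N by rewrite size_map size_iota ltnn.
apply: max_poly_roots pn0 _ _.
  apply/allP => _ /mapP [i _ ->]; apply/rootP/p0.
  by rewrite ger0_norm ?divr_ge0 ?ltW // ltr_pdivrMr // ltr_pMr // ltr1n.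
rewrite map_inj_uniq ?iota_uniq // => i j /(mulfI (lt0r_neq0 e0)) /invr_inj /eqP.
by rewrite eqr_nat => /eqP [].
Qed.

Lemma bounded_poly_size_le1 (R : rcfType) (p : {poly R}) (B : R) :
  (forall t, `|p.[t]| <= B) -> (size p <= 1)%N.
Proof.
wlog lc_ge0 : p / 0 <= lead_coef p => [wlog_p p_bd|].
  have [lc_ge0|lc_lt0] := leP 0 (lead_coef p); first exact: wlog_p lc_ge0 p_bd.
  rewrite -size_polyN; apply: wlog_p => [|t]; last by rewrite hornerN normrN.
  by rewrite lead_coefN oppr_ge0 ltW.
move=> p_bd; rewrite leqNgt; apply/negP => sp.
have lc_gt0 : 0 < lead_coef p.
  by rewrite lt_def lc_ge0 andbT lead_coef_eq0 -size_poly_gt0 (ltn_trans _ sp).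
have [t pt_big] := polyrcf.poly_lim_infty (B + 1) lc_gt0 sp.
have := le_trans (pt_big t (lexx t)) (le_trans (ler_norm _) (p_bd t)); lra.
Qed.

Lemma bounded_polyC (R : rcfType) (p : {poly R}) (B : R) :
  (forall t, `|p.[t]| <= B) -> p = (p`_0)%:P.
Proof. by move/bounded_poly_size_le1/size1_polyC. Qed.

Lemma horner_mmap (R : comRingType) (n : nat) (h : 'I_n -> {poly R})
    (p : mpoly.mpoly n R) (t : R) :
  (mpoly.mmap polyC h p).[t] = mpoly.meval (fun i => (h i).[t]) p.
Proof.
rewrite mpoly.mevalE horner_sum; apply: eq_bigr => m _.
by rewrite hornerCM horner_prod; under eq_bigr do rewrite horner_exp.
Qed.

Lemma mx_entry_le_norm (R : realDomainType) (p q : nat) (A : 'M[R]_(p, q)) i j :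
  `|A i j| <= `|A|.
Proof.
rewrite [X in _ <= X]mx_normrE.
exact: (le_bigmax _ (fun ij : 'I_p * 'I_q => `|A ij.1 ij.2|) (i, j)).
Qed.

Section PolynomialFunctions.
Variables (R : realType) (n : nat).
Implicit Types (p : mpoly.mpoly n R) (a d x y : 'rV[R]_n).

Definition line_restriction p a d : {poly R} :=
  mpoly.mmap polyC (fun i => (a ord0 i)%:P + d ord0 i *: 'X) p.

Lemma horner_line_restriction p a d t :
  (line_restriction p a d).[t] = peval p (a + t *: d).
Proof.
rewrite horner_mmap /peval; apply: mpoly.meval_eq => i.
by rewrite !mxE hornerD hornerC hornerZ hornerX mulrC.
Qed.

Lemma peval_eq0_near p a e :
  0 < e -> (forall x, ball a e x -> peval p x = 0) -> forall x, peval p x = 0.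
Proof.
move=> e_gt0 p0 x; pose d := x - a.
have d1_gt0 : 0 < `|d| + 1 by rewrite ltr_wpDl.
have -> : peval p x = (line_restriction p a d).[1].
  by rewrite horner_line_restriction scale1r addrC subrK.
rewrite (@poly_eq0_near0 _ (line_restriction p a d) (e / (`|d| + 1))) ?horner0 ?divr_gt0 //.
move=> t; rewrite ltr_pdivlMr // => t_small; rewrite horner_line_restriction p0 //.
rewrite -ball_normE /ball_ /= opprD addrA subrr add0r normrN normrZ.
by apply: le_lt_trans t_small; rewrite ler_wpM2l // lerDl.
Qed.

Lemma peval_bounded_const p B :
  (forall x, `|peval p x| <= B) -> forall x y, peval p x = peval p y.
Proof.
move=> p_bd x y; pose d := x - y.
have -> : peval p x = (line_restriction p y d).[1].
  by rewrite horner_line_restriction scale1r addrC subrK.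
have -> : peval p y = (line_restriction p y d).[0].
  by rewrite horner_line_restriction scale0r addr0.
rewrite (@bounded_polyC _ (line_restriction p y d) B) ?hornerC // => t.
by rewrite horner_line_restriction.
Qed.

End PolynomialFunctions.

Lemma peval_comp_mpoly (R : realType) (n m : nat) (f : 'I_m -> mpoly.mpoly n R)
    (p : mpoly.mpoly m R) (x : 'rV[R]_n) :
  peval (mpoly.comp_mpoly [tuple f i | i < m] p) x = peval p (polymap f x).
Proof.
rewrite /peval mpoly.comp_mpoly_meval; apply: mpoly.meval_eq => i.
by rewrite tnth_mktuple mxE.
Qed.

Theorem lemma2p1 (R : realType) (n m : nat) (X : set 'rV[R]_m)
  (f : 'I_m -> mpoly.mpoly n R) (K : set 'rV[R]_n) :
  algebraic_set X -> compact X ->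
  compact K -> (K°) !=set0 ->
  polymap f @` K `<=` X ->
  exists y : 'rV[R]_m, polymap f @` K = [set y] /\ X y.
Proof.
move=> [k [P ->]] cX _ [x0 x0_int] fKX.
have /nbhs_ballP [e /= e_gt0 ballK] : nbhs x0 K := x0_int.
have [M [_ X_bd]] := compact_bounded cX.
have fP0 j x : peval (P j) (polymap f x) = 0.
  rewrite -peval_comp_mpoly; apply: (peval_eq0_near e_gt0) => y /ballK Ky.
  by rewrite peval_comp_mpoly; apply: fKX; exists y.
have f_const x : polymap f x = polymap f x0.
  apply/rowP => i; rewrite !mxE; apply: (@peval_bounded_const _ _ _ (M + 1)) => y.
  have -> : peval (f i) y = polymap f y ord0 i by rewrite mxE.
  apply: le_trans (mx_entry_le_norm (polymap f y) ord0 i) _.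
  by apply: X_bd (fP0 ^~ y); rewrite ltrDl.
have Kx0 : K x0 by exact: interior_subset.
exists (polymap f x0); split; last by apply: fKX; exists x0.
by apply/seteqP; split => [_ [x _ <-]|_ ->] /=; [rewrite f_const | exists x0].
Qed.
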